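(* Each of the following theories (in a language with two binary relation symbols $R$ and $S$, where $S$ is required to be coarser than $R$, i.e. $R\subseteq S$) has superSAP with respect to both relations (simultaneously): (1) $R$ and $S$ are both partial orders; (2) $R$ is a partial order and $S$ is a preorder (reflexive transitive); (3) $R$ is a partial order and $S$ is a tolerance (reflexive symmetric); (4) $R$ is a strict partial order (antireflexive transitive) and $S$ is a graph relation (symmetric antireflexive); (5) $R$ is a directed graph relation (antireflexive) and $S$ is a strict order relation (antireflexive transitive). Moreover, SAP is maintained if families of unary operations which preserve both relations ($x\,R\,y\Rightarrow h(x)\,R\,h(y)$ and $x\,S\,y\Rightarrow h(x)\,S\,h(y)$) or reverse both relations ($x\,R\,y\Rightarrow h(y)\,R\,h(x)$ and $x\,S\,y\Rightarrow h(y)\,S\,h(x)$) are added.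
   Context: A triple to be amalgamated is $\mathbf{A},\mathbf{B},\mathbf{C}$ models with $\mathbf{C}\subseteq\mathbf{A}$, $\mathbf{C}\subseteq\mathbf{B}$, $C=A\cap B$. SAP: there is a model $\mathbf{D}$ with $\mathbf{A},\mathbf{B}\subseteq\mathbf{D}$. SuperSAP with respect to a relation $T$: a $\mathbf{D}$ witnessing SAP such that for $a\in A\setminus B$, $b\in B\setminus A$, $a\,T_{\mathbf{D}}\,b$ implies $a\,T_{\mathbf{A}}\,c\,T_{\mathbf{B}}\,b$ for some $c\in C$, and $b\,T_{\mathbf{D}}\,a$ implies $b\,T_{\mathbf{B}}\,c\,T_{\mathbf{A}}\,a$ for some $c\in C$. *)

(* Structures in the language {R, S} plus a family of unary
   operation symbols indexed by I, all living inside an ambient type T, so that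
   "C ⊆ A" and "C = A ∩ B" have their literal set-theoretic meaning. *)

Set Implicit Arguments.

Record str (T I : Type) := Str {
  car : T -> Prop;
  rR  : T -> T -> Prop;          (* interpretation of R (meaningful on car) *)
  rS  : T -> T -> Prop;          (* interpretation of S (meaningful on car) *)
  op  : I -> T -> T
}.

Section Defs.
Variables T I : Type.

Definition refl_on (P : T -> Prop) (r : T -> T -> Prop) :=
  forall x, P x -> r x x.
Definition irrefl_on (P : T -> Prop) (r : T -> T -> Prop) :=
  forall x, P x -> ~ r x x.
Definition sym_on (P : T -> Prop) (r : T -> T -> Prop) :=
  forall x y, P x -> P y -> r x y -> r y x.
Definition antisym_on (P : T -> Prop) (r : T -> T -> Prop) :=
  forall x y, P x -> P y -> r x y -> r y x -> x = y.
Definition trans_on (P : T -> Prop) (r : T -> T -> Prop) :=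
  forall x y z, P x -> P y -> P z -> r x y -> r y z -> r x z.

Definition partial_order_on P r := refl_on P r /\ antisym_on P r /\ trans_on P r.
Definition preorder_on P r := refl_on P r /\ trans_on P r.
Definition tolerance_on P r := refl_on P r /\ sym_on P r.
Definition strict_order_on P r := irrefl_on P r /\ trans_on P r.
Definition graph_on P r := sym_on P r /\ irrefl_on P r.
Definition digraph_on P r := irrefl_on P r.

Inductive theory := Th1 | Th2 | Th3 | Th4 | Th5.

Definition th_axioms (th : theory) (P : T -> Prop) (R S : T -> T -> Prop) :=
  match th with
  | Th1 => partial_order_on P R /\ partial_order_on P S
  | Th2 => partial_order_on P R /\ preorder_on P S
  | Th3 => partial_order_on P R /\ tolerance_on P S
  | Th4 => strict_order_on P R /\ graph_on P S
  | Th5 => digraph_on P R /\ strict_order_on P S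
  end.

Definition model (th : theory) (dir : I -> bool) (M : str T I) : Prop :=
  (forall i x, car M x -> car M (op M i x)) /\
  th_axioms th (car M) (rR M) (rS M) /\
  (forall x y, car M x -> car M y -> rR M x y -> rS M x y) /\
  (forall i x y, car M x -> car M y ->
     if dir i then
       (rR M x y -> rR M (op M i x) (op M i y)) /\
       (rS M x y -> rS M (op M i x) (op M i y))
     else
       (rR M x y -> rR M (op M i y) (op M i x)) /\
       (rS M x y -> rS M (op M i y) (op M i x))).

Definition substr (C A : str T I) : Prop :=
  (forall x, car C x -> car A x) /\
  (forall x y, car C x -> car C y -> (rR C x y <-> rR A x y)) /\
  (forall x y, car C x -> car C y -> (rS C x y <-> rS A x y)) /\
  (forall i x, car C x -> op C i x = op A i x).

Definition triple (K : str T I -> Prop) (A B C : str T I) : Prop :=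
  K A /\ K B /\ K C /\ substr C A /\ substr C B /\
  (forall x, car C x <-> (car A x /\ car B x)).

Definition SAP (K : str T I -> Prop) : Prop :=
  forall A B C, triple K A B C ->
    exists D, K D /\ substr A D /\ substr B D.

Definition super_cond (rel : str T I -> T -> T -> Prop) (A B C D : str T I) :=
  forall a b, car A a -> ~ car B a -> car B b -> ~ car A b ->
    (rel D a b -> exists c, car C c /\ rel A a c /\ rel B c b) /\
    (rel D b a -> exists c, car C c /\ rel B b c /\ rel A c a).

Definition superSAP_RS (K : str T I -> Prop) : Prop :=
  forall A B C, triple K A B C ->
    exists D, K D /\ substr A D /\ substr B D /\
      super_cond (@rR T I) A B C D /\ super_cond (@rS T I) A B C D.

End Defs.

Definition no_ops : Empty_set -> bool := fun e => match e with end.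

(* The amalgam D lives on A ∪ B, its operations are glued from those of A and B
   (they agree on C = A ∩ B), and each relation is amalgamated from its two halves:
   - a transitive relation by its free amalgam, the union of the halves closed under
     composition through C.  Since each half is transitive it restricts back to the
     given relation on A and on B, it is again transitive, and it is antisymmetric when
     both halves are (a cycle through A \ B and B \ A would collapse onto a point of C);
   - the digraph R of theory (5) simply by the union of its halves;
   - the symmetric S of theories (3) and (4) by the union of its halves together with
     the free amalgam of R and its converse, which keeps R ⊆ S and, as R ⊆ S on A and
     on B, still restricts correctly.
   In every case a pair (a, b) ∈ (A \ B) × (B \ A) can only be related through some
   c ∈ C, which is superSAP, and each construction is positive in the two halves, so
   any map preserving (or reversing) both halves preserves (or reverses) the amalgam. *)

From Stdlib Require Import ClassicalEpsilon.

Set Implicit Arguments.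

Section Relations.
Variable T : Type.
Implicit Types (P Q : T -> Prop) (r s rd : T -> T -> Prop) (h : T -> T).

Definition union P Q x : Prop := P x \/ Q x.

Definition agree_on P r s := forall x y, P x -> P y -> (r x y <-> s x y).

Definition subrel_on P r s := forall x y, P x -> P y -> r x y -> s x y.

Definition oriented (b : bool) r x y : Prop := if b then r x y else r y x.

Definition respects P h b r := forall x y, P x -> P y -> r x y -> oriented b r (h x) (h y).

Lemma refl_on_union_agree P Q r s rd :
  refl_on P r -> refl_on Q s -> agree_on P r rd -> agree_on Q s rd ->
  refl_on (union P Q) rd.
Proof.
  intros reflP reflQ agreeP agreeQ x [Px | Qx].
  - apply (agreeP x x); auto.
  - apply (agreeQ x x); auto.
Qed.

Lemma irrefl_on_union_agree P Q r s rd :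
  irrefl_on P r -> irrefl_on Q s -> agree_on P r rd -> agree_on Q s rd ->
  irrefl_on (union P Q) rd.
Proof.
  intros irrP irrQ agreeP agreeQ x [Px | Qx] rxx.
  - apply (irrP x Px), (agreeP x x); auto.
  - apply (irrQ x Qx), (agreeQ x x); auto.
Qed.

End Relations.

Section Gluing.
Variables (T : Type) (PA PB PC : T -> Prop).
Hypothesis C_meet : forall x, PC x <-> PA x /\ PB x.

Lemma C_in_A x : PC x -> PA x.
Proof. intro Cx; apply (C_meet x), Cx. Qed.

Lemma C_in_B x : PC x -> PB x.
Proof. intro Cx; apply (C_meet x), Cx. Qed.

Lemma in_C x : PA x -> PB x -> PC x.
Proof. intros Ax Bx; apply (C_meet x); auto. Qed.

Definition factors_through (rA rB rd : T -> T -> Prop) :=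
  forall a b, PA a -> ~ PB a -> PB b -> ~ PA b ->
    (rd a b -> exists c, PC c /\ rA a c /\ rB c b) /\
    (rd b a -> exists c, PC c /\ rB b c /\ rA c a).

Definition amalgamates (rA rB rd : T -> T -> Prop) :=
  agree_on PA rA rd /\ agree_on PB rB rd /\ factors_through rA rB rd.

Section FreeAmalgam.
Variables rA rB : T -> T -> Prop.
Hypothesis agreeC : agree_on PC rA rB.

Definition union_rel x y := (PA x /\ PA y /\ rA x y) \/ (PB x /\ PB y /\ rB x y).

Definition free_amalg x y :=
  union_rel x y \/ exists c, PC c /\ union_rel x c /\ union_rel c y.

Lemma union_rel_common x y : union_rel x y -> (PA x /\ PA y) \/ (PB x /\ PB y).
Proof. unfold union_rel; tauto. Qed.

Lemma union_rel_agree_A : agree_on PA rA union_rel.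
Proof.
  intros x y Ax Ay; split; [left; auto |].
  intros [(_ & _ & rxy) | (Bx & By & rxy)]; [exact rxy |].
  apply agreeC; auto using in_C.
Qed.

Lemma union_rel_agree_B : agree_on PB rB union_rel.
Proof.
  intros x y Bx By; split; [right; auto |].
  intros [(Ax & Ay & rxy) | (_ & _ & rxy)]; [| exact rxy].
  apply agreeC; auto using in_C.
Qed.

Lemma union_rel_amalgamates : amalgamates rA rB union_rel.
Proof.
  split; [exact union_rel_agree_A | split; [exact union_rel_agree_B |]].
  intros a b _ nBa _ nAb; unfold union_rel; tauto.
Qed.

Hypotheses (transA : trans_on PA rA) (transB : trans_on PB rB).

Lemma union_rel_trans_C_r x y z : PC z -> union_rel x y -> union_rel y z -> union_rel x z.
Proof.
  intros Cz [(Ax & Ay & rxy) | (Bx & By & rxy)] Vyz.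
  - left; split; [| split]; auto using C_in_A.
    apply transA with (y := y); auto using C_in_A; apply union_rel_agree_A; auto using C_in_A.
  - right; split; [| split]; auto using C_in_B.
    apply transB with (y := y); auto using C_in_B; apply union_rel_agree_B; auto using C_in_B.
Qed.

Lemma union_rel_trans_C_l x y z : PC x -> union_rel x y -> union_rel y z -> union_rel x z.
Proof.
  intros Cx Vxy [(Ay & Az & ryz) | (By & Bz & ryz)].
  - left; split; [| split]; auto using C_in_A.
    apply transA with (y := y); auto using C_in_A; apply union_rel_agree_A; auto using C_in_A.
  - right; split; [| split]; auto using C_in_B.
    apply transB with (y := y); auto using C_in_B; apply union_rel_agree_B; auto using C_in_B.
Qed.

Lemma union_rel_comp x y z : union_rel x y -> union_rel y z -> free_amalg x z.
Proof.
  intros [(Ax & Ay & rxy) | (Bx & By & rxy)] [(Ay' & Az & ryz) | (By' & Bz & ryz)].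
  - left; left; split; [| split]; auto; apply transA with (y := y); auto.
  - right; exists y; split; [apply in_C |]; auto; split; [left | right]; auto.
  - right; exists y; split; [apply in_C |]; auto; split; [right | left]; auto.
  - left; right; split; [| split]; auto; apply transB with (y := y); auto.
Qed.

Lemma free_amalg_trans : trans_on (union PA PB) free_amalg.
Proof.
  intros x y z _ _ _ [Vxy | (c & Cc & Vxc & Vcy)] [Vyz | (d & Cd & Vyd & Vdz)].
  - exact (union_rel_comp Vxy Vyz).
  - right; exists d; split; [| split]; auto.
    exact (union_rel_trans_C_r Cd Vxy Vyd).
  - right; exists c; split; [| split]; auto.
    exact (union_rel_trans_C_l Cc Vcy Vyz).
  - right; exists c; split; [| split]; auto.
    exact (union_rel_trans_C_l Cc (union_rel_trans_C_r Cd Vcy Vyd) Vdz).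
Qed.

Lemma free_amalg_agree_A : agree_on PA rA free_amalg.
Proof.
  intros x y Ax Ay; split; [left; apply union_rel_agree_A; auto |].
  intros [Vxy | (c & Cc & Vxc & Vcy)]; [apply union_rel_agree_A; auto |].
  apply transA with (y := c); auto using C_in_A;
    [apply union_rel_agree_A | apply union_rel_agree_A]; auto using C_in_A.
Qed.

Lemma free_amalg_agree_B : agree_on PB rB free_amalg.
Proof.
  intros x y Bx By; split; [left; apply union_rel_agree_B; auto |].
  intros [Vxy | (c & Cc & Vxc & Vcy)]; [apply union_rel_agree_B; auto |].
  apply transB with (y := c); auto using C_in_B;
    [apply union_rel_agree_B | apply union_rel_agree_B]; auto using C_in_B.
Qed.

Lemma free_amalg_amalgamates : amalgamates rA rB free_amalg.
Proof.
  split; [exact free_amalg_agree_A | split; [exact free_amalg_agree_B |]].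
  intros a b _ nBa _ nAb; unfold free_amalg, union_rel; split.
  - intros [? | (c & Cc & ? & ?)]; [tauto | exists c; tauto].
  - intros [? | (c & Cc & ? & ?)]; [tauto | exists c; tauto].
Qed.

Lemma free_amalg_antisym :
  antisym_on PA rA -> antisym_on PB rB -> antisym_on (union PA PB) free_amalg.
Proof.
  intros asymA asymB x y Dx Dy Uxy Uyx.
  assert (common : (PA x /\ PA y) \/ (PB x /\ PB y)).
  { destruct Uxy as [Vxy | (c & Cc & Vxc & Vcy)]; [exact (union_rel_common Vxy) |].
    assert (Uyc : free_amalg y c).
    { apply free_amalg_trans with (y := x); auto; [left; auto using C_in_A | left; exact Vxc]. }
    assert (y = c) as ->; [| exact (union_rel_common Vxc)].
    destruct Vcy as [(Ac & Ay & rcy) | (Bc & By & rcy)].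
    - apply asymA; auto; apply free_amalg_agree_A; auto.
    - apply asymB; auto; apply free_amalg_agree_B; auto. }
  destruct common as [[Ax Ay] | [Bx By]].
  - apply asymA; auto; [apply free_amalg_agree_A | apply free_amalg_agree_A]; auto.
  - apply asymB; auto; [apply free_amalg_agree_B | apply free_amalg_agree_B]; auto.
Qed.

End FreeAmalgam.

Lemma union_rel_mono rA rB sA sB :
  subrel_on PA rA sA -> subrel_on PB rB sB ->
  forall x y, union_rel rA rB x y -> union_rel sA sB x y.
Proof.
  intros subA subB x y [(Ax & Ay & rxy) | (Bx & By & rxy)]; [left | right]; auto.
Qed.

Lemma free_amalg_mono rA rB sA sB :
  subrel_on PA rA sA -> subrel_on PB rB sB ->
  forall x y, free_amalg rA rB x y -> free_amalg sA sB x y.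
Proof.
  intros subA subB x y [Vxy | (c & Cc & Vxc & Vcy)].
  - left; exact (union_rel_mono subA subB Vxy).
  - right; exists c; split; [exact Cc |].
    split; [exact (union_rel_mono subA subB Vxc) | exact (union_rel_mono subA subB Vcy)].
Qed.

Section SymAmalgam.
Variables rA rB sA sB : T -> T -> Prop.

Definition sym_amalg x y :=
  union_rel sA sB x y \/ free_amalg rA rB x y \/ free_amalg rA rB y x.

Lemma sym_amalg_sym : sym_on PA sA -> sym_on PB sB -> sym_on (union PA PB) sym_amalg.
Proof.
  intros symA symB x y _ _ [[(Ax & Ay & sxy) | (Bx & By & sxy)] | [Uxy | Uyx]];
    [left; left | left; right | right; right | right; left]; auto.
Qed.

Hypotheses (agreeC_r : agree_on PC rA rB) (agreeC_s : agree_on PC sA sB).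
Hypotheses (transA : trans_on PA rA) (transB : trans_on PB rB).
Hypotheses (symA : sym_on PA sA) (symB : sym_on PB sB).
Hypotheses (subA : subrel_on PA rA sA) (subB : subrel_on PB rB sB).

Lemma sym_amalg_amalgamates : amalgamates sA sB sym_amalg.
Proof.
  split; [| split].
  - intros x y Ax Ay; split; [left; left; auto |].
    intros [Vxy | [Uxy | Uyx]]; [apply union_rel_agree_A in Vxy; auto | |].
    + apply subA; auto; apply (free_amalg_agree_A agreeC_r transA); auto.
    + apply symA, subA; auto; apply (free_amalg_agree_A agreeC_r transA); auto.
  - intros x y Bx By; split; [left; right; auto |].
    intros [Vxy | [Uxy | Uyx]]; [apply union_rel_agree_B in Vxy; auto | |].
    + apply subB; auto; apply (free_amalg_agree_B agreeC_r transB); auto.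
    + apply symB, subB; auto; apply (free_amalg_agree_B agreeC_r transB); auto.
  - intros a b Aa nBa Bb nAb.
    destruct (free_amalg_amalgamates agreeC_r transA transB) as (_ & _ & factors).
    destruct (factors a b Aa nBa Bb nAb) as [fab fba].
    split; intros [V | [U | U]];
      try (exfalso; destruct (union_rel_common V); tauto);
      first [destruct (fab U) as (c & Cc & r1 & r2) | destruct (fba U) as (c & Cc & r1 & r2)];
      exists c; repeat split; auto using C_in_A, C_in_B.
Qed.

End SymAmalgam.

Section Transport.
Variables (h : T -> T) (b : bool).
Hypotheses (hA : forall x, PA x -> PA (h x)) (hB : forall x, PB x -> PB (h x)).

Lemma union_rel_respects rA rB :
  respects PA h b rA -> respects PB h b rB ->
  forall x y, union_rel rA rB x y -> oriented b (union_rel rA rB) (h x) (h y).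
Proof.
  intros respA respB x y [(Ax & Ay & rxy) | (Bx & By & rxy)].
  - generalize (respA x y Ax Ay rxy); destruct b; simpl; left; auto.
  - generalize (respB x y Bx By rxy); destruct b; simpl; right; auto.
Qed.

Lemma free_amalg_respects rA rB :
  respects PA h b rA -> respects PB h b rB ->
  forall x y, free_amalg rA rB x y -> oriented b (free_amalg rA rB) (h x) (h y).
Proof.
  intros respA respB x y [Vxy | (c & Cc & Vxc & Vcy)].
  - generalize (union_rel_respects respA respB Vxy); destruct b; simpl; left; auto.
  - assert (Chc : PC (h c)) by auto using in_C, C_in_A, C_in_B.
    generalize (union_rel_respects respA respB Vxc), (union_rel_respects respA respB Vcy).
    destruct b; simpl; right; exists (h c); auto.
Qed.

Lemma sym_amalg_respects rA rB sA sB :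
  respects PA h b rA -> respects PB h b rB -> respects PA h b sA -> respects PB h b sB ->
  forall x y, sym_amalg rA rB sA sB x y -> oriented b (sym_amalg rA rB sA sB) (h x) (h y).
Proof.
  intros respA respB respsA respsB x y [Vxy | [Uxy | Uyx]].
  - generalize (union_rel_respects respsA respsB Vxy); destruct b; simpl; unfold sym_amalg; tauto.
  - generalize (free_amalg_respects respA respB Uxy); destruct b; simpl; unfold sym_amalg; tauto.
  - generalize (free_amalg_respects respA respB Uyx); destruct b; simpl; unfold sym_amalg; tauto.
Qed.

End Transport.
End Gluing.

Section Structures.
Variables T I : Type.
Implicit Types (M : str T I) (h : T -> T) (b : bool).

Definition endo_of M h b :=
  (forall x, car M x -> car M (h x)) /\
  respects (car M) h b (rR M) /\ respects (car M) h b (rS M).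

Lemma model_iff th dir M :
  model th dir M <->
  th_axioms th (car M) (rR M) (rS M) /\ subrel_on (car M) (rR M) (rS M) /\
  (forall i, endo_of M (op M i) (dir i)).
Proof.
  unfold model, endo_of, respects, oriented; split.
  - intros (closed & axioms & sub & ops); split; [exact axioms | split; [exact sub |]].
    intro i; split; [auto |].
    split; intros x y Mx My; specialize (ops i x y Mx My); destruct (dir i); tauto.
  - intros (axioms & sub & endo); split; [intro i; apply endo |].
    split; [exact axioms | split; [exact sub |]].
    intros i x y Mx My; destruct (endo i) as (_ & respR & respS).
    specialize (respR x y Mx My); specialize (respS x y Mx My); destruct (dir i); tauto.
Qed.

Lemma endo_of_ext M h h' b :
  endo_of M h b -> (forall x, car M x -> h' x = h x) -> endo_of M h' b.
Proof.
  intros (closed & respR & respS) ext; split; [| split].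
  - intros x Mx; rewrite (ext x Mx); auto.
  - intros x y Mx My rxy; rewrite (ext x Mx), (ext y My); auto.
  - intros x y Mx My sxy; rewrite (ext x Mx), (ext y My); auto.
Qed.

Section Amalgam.
Variables (th : theory) (dir : I -> bool) (A B C : str T I).
Hypothesis ABC : triple (model th dir) A B C.

Definition glue_op i x := if excluded_middle_informative (car A x) then op A i x else op B i x.

Definition amalgam rd sd : str T I := Str (union (car A) (car B)) rd sd glue_op.

Definition amalg_R : T -> T -> Prop :=
  match th with
  | Th5 => union_rel (car A) (car B) (rR A) (rR B)
  | _ => free_amalg (car A) (car B) (car C) (rR A) (rR B)
  end.

Definition amalg_S : T -> T -> Prop :=
  match th with
  | Th3 | Th4 => sym_amalg (car A) (car B) (car C) (rR A) (rR B) (rS A) (rS B)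
  | _ => free_amalg (car A) (car B) (car C) (rS A) (rS B)
  end.

Lemma triple_meet x : car C x <-> car A x /\ car B x.
Proof. destruct ABC as (_ & _ & _ & _ & _ & meet); apply meet. Qed.

Lemma triple_agree_R : agree_on (car C) (rR A) (rR B).
Proof.
  destruct ABC as (_ & _ & _ & (_ & CA & _) & (_ & CB & _) & _).
  intros x y Cx Cy; rewrite <- CA, <- CB; tauto.
Qed.

Lemma triple_agree_S : agree_on (car C) (rS A) (rS B).
Proof.
  destruct ABC as (_ & _ & _ & (_ & _ & CA & _) & (_ & _ & CB & _) & _).
  intros x y Cx Cy; rewrite <- CA, <- CB; tauto.
Qed.

Lemma glue_op_A i x : car A x -> glue_op i x = op A i x.
Proof. intro Ax; unfold glue_op; destruct (excluded_middle_informative (car A x)); tauto. Qed.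

Lemma glue_op_B i x : car B x -> glue_op i x = op B i x.
Proof.
  intro Bx; unfold glue_op; destruct (excluded_middle_informative (car A x)) as [Ax |]; auto.
  destruct ABC as (_ & _ & _ & (_ & _ & _ & CA) & (_ & _ & _ & CB) & _).
  assert (Cx : car C x) by (apply triple_meet; auto).
  rewrite <- (CA i x Cx), (CB i x Cx); reflexivity.
Qed.

Lemma model_A : model th dir A.
Proof. apply ABC. Qed.

Lemma model_B : model th dir B.
Proof. apply ABC. Qed.

Lemma axioms_A : th_axioms th (car A) (rR A) (rS A).
Proof. destruct model_A as (_ & axioms & _); exact axioms. Qed.

Lemma axioms_B : th_axioms th (car B) (rR B) (rS B).
Proof. destruct model_B as (_ & axioms & _); exact axioms. Qed.

Lemma subrel_A : subrel_on (car A) (rR A) (rS A).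
Proof. destruct model_A as (_ & _ & sub & _); exact sub. Qed.

Lemma subrel_B : subrel_on (car B) (rR B) (rS B).
Proof. destruct model_B as (_ & _ & sub & _); exact sub. Qed.

Lemma endo_A i : endo_of A (op A i) (dir i).
Proof. destruct (proj1 (model_iff th dir A) model_A) as (_ & _ & endo); apply endo. Qed.

Lemma endo_B i : endo_of B (op B i) (dir i).
Proof. destruct (proj1 (model_iff th dir B) model_B) as (_ & _ & endo); apply endo. Qed.

Ltac unfold_axioms :=
  unfold partial_order_on, preorder_on, tolerance_on, strict_order_on, graph_on,
    digraph_on in *.

Lemma amalg_R_amalgamates : amalgamates (car A) (car B) (car C) (rR A) (rR B) amalg_R.
Proof.
  generalize axioms_A, axioms_B, triple_meet, triple_agree_R.
  unfold amalg_R; destruct th; simpl; unfold_axioms; intros axA axB meet agree;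
    [apply free_amalg_amalgamates .. | apply union_rel_amalgamates]; tauto.
Qed.

Lemma amalg_S_amalgamates : amalgamates (car A) (car B) (car C) (rS A) (rS B) amalg_S.
Proof.
  generalize axioms_A, axioms_B, triple_meet, triple_agree_R, triple_agree_S, subrel_A, subrel_B.
  unfold amalg_S; destruct th; simpl; unfold_axioms; intros axA axB meet agreeR agreeS subA subB;
    [ apply free_amalg_amalgamates | apply free_amalg_amalgamates
    | apply sym_amalg_amalgamates with (rA := rR A) (rB := rR B)
    | apply sym_amalg_amalgamates with (rA := rR A) (rB := rR B)
    | apply free_amalg_amalgamates ]; tauto.
Qed.

Lemma amalg_axioms : th_axioms th (union (car A) (car B)) amalg_R amalg_S.
Proof.
  generalize axioms_A, axioms_B, triple_meet, triple_agree_R, triple_agree_S,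
    amalg_R_amalgamates, amalg_S_amalgamates.
  unfold amalg_R, amalg_S; destruct th; simpl; unfold_axioms;
    intros axA axB meet agreeR agreeS (RA & RB & _) (SA & SB & _);
    decompose [and] axA; decompose [and] axB;
    repeat split;
    eauto using refl_on_union_agree, irrefl_on_union_agree, free_amalg_trans, free_amalg_antisym,
      sym_amalg_sym.
Qed.

Lemma amalg_subrel : subrel_on (union (car A) (car B)) amalg_R amalg_S.
Proof.
  generalize subrel_A, subrel_B.
  unfold amalg_R, amalg_S; destruct th; simpl; intros subA subB x y _ _ rxy.
  - exact (free_amalg_mono subA subB rxy).
  - exact (free_amalg_mono subA subB rxy).
  - right; left; exact rxy.
  - right; left; exact rxy.
  - left; exact (union_rel_mono subA subB rxy).
Qed.

Lemma amalg_respects h b :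
  endo_of A h b -> endo_of B h b ->
  (forall x y, amalg_R x y -> oriented b amalg_R (h x) (h y)) /\
  (forall x y, amalg_S x y -> oriented b amalg_S (h x) (h y)).
Proof.
  generalize triple_meet.
  intros meet (hA & respRA & respSA) (hB & respRB & respSB).
  unfold amalg_R, amalg_S; destruct th; split;
    eauto using union_rel_respects, free_amalg_respects, sym_amalg_respects.
Qed.

Lemma amalgam_model : model th dir (amalgam amalg_R amalg_S).
Proof.
  apply model_iff; split; [exact amalg_axioms | split; [exact amalg_subrel |]].
  intro i.
  assert (endoA : endo_of A (glue_op i) (dir i)).
  { apply endo_of_ext with (op A i); [apply endo_A | apply glue_op_A]. }
  assert (endoB : endo_of B (glue_op i) (dir i)).
  { apply endo_of_ext with (op B i); [apply endo_B | apply glue_op_B]. }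
  destruct (amalg_respects endoA endoB) as [respR respS].
  split; [| split; intros x y _ _; [apply respR | apply respS]].
  intros x [Ax | Bx]; [left; apply (proj1 endoA), Ax | right; apply (proj1 endoB), Bx].
Qed.

Lemma amalgam_substr_A rd sd :
  agree_on (car A) (rR A) rd -> agree_on (car A) (rS A) sd -> substr A (amalgam rd sd).
Proof.
  intros agreeR agreeS; split; [intros x Ax; left; exact Ax |].
  split; [exact agreeR | split; [exact agreeS |]].
  intros i x Ax; symmetry; apply glue_op_A, Ax.
Qed.

Lemma amalgam_substr_B rd sd :
  agree_on (car B) (rR B) rd -> agree_on (car B) (rS B) sd -> substr B (amalgam rd sd).
Proof.
  intros agreeR agreeS; split; [intros x Bx; right; exact Bx |].
  split; [exact agreeR | split; [exact agreeS |]].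
  intros i x Bx; symmetry; apply glue_op_B, Bx.
Qed.

Lemma amalgam_exists :
  exists D, model th dir D /\ substr A D /\ substr B D /\
    super_cond (@rR T I) A B C D /\ super_cond (@rS T I) A B C D.
Proof.
  destruct amalg_R_amalgamates as (RA & RB & R_factors).
  destruct amalg_S_amalgamates as (SA & SB & S_factors).
  exists (amalgam amalg_R amalg_S); split; [exact amalgam_model |].
  split; [apply amalgam_substr_A; assumption |].
  split; [apply amalgam_substr_B; assumption |].
  split; [exact R_factors | exact S_factors].
Qed.

End Amalgam.
End Structures.

Theorem corollary3p2 :
  forall th : theory,
    (forall T : Type, superSAP_RS (model (T := T) th no_ops)) /\
    (forall (T I : Type) (dir : I -> bool), SAP (model (T := T) th dir)).
Proof.
  intros th; split.
  - intros T A B C ABC; exact (amalgam_exists ABC).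
  - intros T I dir A B C ABC.
    destruct (amalgam_exists ABC) as (D & model_D & sub_A & sub_B & _).
    exists D; auto.
Qed.
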